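(* Let $H=E+D$ and $K=E'+D'$ be closed additive subgroups of $\mathbb{R}^{n}$ (with decompositions as in the context) and let $f:H\to K$ be a homomorphism of closed additive groups. Then (i) $\mathrm{Ker}(f)$ is a closed additive subgroup of $\mathbb{R}^n$, and (ii) $\mathrm{Im}(f)$ is a closed additive subgroup of $\mathbb{R}^n$.
   Context: Every closed additive subgroup $H$ of $\mathbb{R}^n$ can be written $H=E+D$ with $E$ a vector subspace and $D$ a discrete additive subgroup with $E\cap\mathrm{vect}(D)=\{0\}$ ($\mathrm{vect}$ = real span); such decompositions $H=E+D$, $K=E'+D'$ are fixed. A map $f:H\to K$ is a homomorphism of closed additive groups if there are a linear map $f_1:E\to E'$ and a group homomorphism $f_2:D\to D'$ with $f(\lambda x+py)=\lambda f_1(x)+pf_2(y)$ for all $\lambda\in\mathbb{R}$, $p\in\mathbb{Z}$, $x\in E$, $y\in D$. *)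

From HB Require Import structures.
From mathcomp Require Import all_boot all_order all_algebra.
From mathcomp Require Import all_classical all_reals all_analysis.
Set Implicit Arguments. Unset Strict Implicit. Unset Printing Implicit Defensive.
Import Order.TTheory GRing.Theory Num.Theory.
Import numFieldNormedType.Exports.
Local Open Scope classical_set_scope.
Local Open Scope ring_scope.

Section Defs.
Variables (R : realType) (n : nat).
Notation V := 'rV[R]_n.

Definition add_subgroup (A : set V) : Prop :=
  A 0 /\ (forall x y, A x -> A y -> A (x - y)).

Definition closed_add_subgroup (A : set V) : Prop :=
  add_subgroup A /\ closed A.

Definition vsubspace (E : set V) : Prop :=
  E 0 /\ (forall (a : R) x y, E x -> E y -> E (a *: x + y)).

Definition discrete_add_subgroup (D : set V) : Prop :=
  add_subgroup D /\
  (forall x, D x -> exists U, nbhs x U /\ U `&` D = [set x]).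

Definition vect (D : set V) : set V :=
  [set v | exists (k : nat) (c : 'I_k -> R) (w : 'I_k -> V),
     (forall i, D (w i)) /\ v = \sum_(i < k) c i *: w i].

Definition setadd (A B : set V) : set V :=
  [set z | exists x y, A x /\ B y /\ z = x + y].

Definition cag_decomp (H E D : set V) : Prop :=
  vsubspace E /\ discrete_add_subgroup D /\
  E `&` vect D = [set 0] /\ H = setadd E D.

Definition cag_hom (E D E' D' : set V) (f : V -> V) : Prop :=
  exists (f1 f2 : V -> V),
    (forall x, E x -> E' (f1 x)) /\
    (forall (a : R) x y, E x -> E y -> f1 (a *: x + y) = a *: f1 x + f1 y) /\
    (forall y, D y -> D' (f2 y)) /\
    (forall y z, D y -> D z -> f2 (y + z) = f2 y + f2 z) /\
    (forall (l : R) (p : int) x y, E x -> D y ->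
        f (l *: x + y *~ p) = l *: f1 x + f2 y *~ p).

Definition Ker (H : set V) (f : V -> V) : set V := [set h | H h /\ f h = 0].
Definition Im (H : set V) (f : V -> V) : set V := f @` H.

End Defs.

From HB Require Import structures.
From mathcomp Require Import all_boot all_order all_algebra.
From mathcomp Require Import all_classical all_reals all_analysis.
Import GRing.Theory.
Import numFieldNormedType.Exports.
Local Open Scope classical_set_scope.
Local Open Scope ring_scope.

(* Kernel and image split along the decompositions:
   Ker f = (E ∩ ker f1) + (D ∩ ker f2), because E' ∩ vect D' = 0 forces
   f1 x = f2 y = 0 whenever f1 x + f2 y = 0, and Im f = f1(E) + f2(D).
   Each is a sum W + G with W a subspace of E and G a subset of D, and such
   a sum is closed whenever E + D is: the projection onto vect D along E is
   continuous and maps W + G into the discrete set D, so near a limit point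
   z = e + d of W + G the G-component is eventually d, and z - d lies in the
   closed subspace W. *)

Section Closedness.
Context {R : realType} {n : nat}.
Notation V := 'rV[R]_n.

Lemma mulmx_continuous (A : 'M[R]_n) : continuous (fun v : V => v *m A).
Proof.
have -> : (fun v : V => v *m A) = (fun v => \sum_(i < n) v 0 i *: row i A).
  by apply: funext => v; rewrite mulmx_sum_row.
apply: continuous_big; first exact: add_continuous.
by move=> i _ x; apply: continuousZr_tmp; exact: coord_continuous.
Qed.

Definition seqmx (l : seq V) : 'M[R]_(size l, n) := \matrix_(i < size l) l`_i.

Lemma sub_seqmxP (l : seq V) (v : V) : (v <= seqmx l)%MS ->
  exists c : 'I_(size l) -> R, v = \sum_(i < size l) c i *: l`_i.
Proof.
case/submxP=> u ->; exists (fun i => u 0 i); rewrite mulmx_sum_row.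
by apply: eq_bigr => i _; rewrite rowK.
Qed.

Lemma seqmx_spanning (S : set V) : exists l : seq V,
  (forall x, x \in l -> S x) /\ (forall s, S s -> (s <= seqmx l)%MS).
Proof.
pose P k := `[< exists l : seq V, (forall x, x \in l -> S x) /\
                                   \rank (seqmx l) = k >].
have exP : exists k, P k.
  by exists 0%N; apply/asboolP; exists [::]; split; rewrite ?flatmx0 ?mxrank0.
have ubP k : P k -> (k <= n)%N by case/asboolP=> l [_ <-]; exact: rank_leq_col.
case: (ex_maxnP exP ubP) => k /asboolP [l [lS rk_l]] k_max.
exists l; split => // s Ss.
have sub_l : (seqmx l <= seqmx (s :: l))%MS.
  apply/row_subP => i; rewrite rowK.
  have -> : l`_i = row (lift ord0 i) (seqmx (s :: l)) by rewrite rowK.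
  exact: row_sub.
have rk_sl : (\rank (seqmx (s :: l)) <= k)%N.
  apply: k_max; apply/asboolP; exists (s :: l); split => //.
  by move=> x; rewrite inE => /orP [/eqP -> //|]; exact: lS.
have /eqmxP eq_l : (seqmx l == seqmx (s :: l))%MS.
  by rewrite -(mxrank_leqif_eq sub_l) eqn_leq mxrankS // rk_l rk_sl.
have -> : s = row ord0 (seqmx (s :: l)) by rewrite rowK.
by rewrite eq_l row_sub.
Qed.

Lemma vsubspace_sub_seqmx (W : set V) (l : seq V) : vsubspace W ->
  (forall x, x \in l -> W x) -> forall v, (v <= seqmx l)%MS -> W v.
Proof.
move=> [W0 W_lin] lW v /sub_seqmxP [c ->].
have W_add x y : W x -> W y -> W (x + y).
  by move=> Wx Wy; rewrite -[x]scale1r; exact: W_lin.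
apply: (big_ind W) => // i _.
by rewrite -[_ *: _]addr0; apply: W_lin => //; apply: lW; rewrite mem_nth.
Qed.

Lemma vect_sub_seqmx (D : set V) (l : seq V) :
  (forall x, x \in l -> D x) -> forall v, (v <= seqmx l)%MS -> vect D v.
Proof.
move=> lD v /sub_seqmxP [c ->]; exists (size l), c, (fun i => l`_i).
by split=> // i; apply: lD; rewrite mem_nth.
Qed.

Lemma vsubspace_seqmx (W : set V) : vsubspace W ->
  exists l : seq V, forall v, W v <-> (v <= seqmx l)%MS.
Proof.
move=> vW; have [l [lW Wl]] := seqmx_spanning W.
by exists l => v; split; [exact: Wl | exact: vsubspace_sub_seqmx].
Qed.

Lemma capmx_rV_eq0 m1 m2 (A : 'M[R]_(m1, n)) (B : 'M[R]_(m2, n)) :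
  (forall u : V, (u <= A)%MS -> (u <= B)%MS -> u = 0) -> (A :&: B = 0)%MS.
Proof.
move=> AB0; apply/eqP; rewrite -submx0; apply/row_subP => i.
have AB_i := row_sub i (A :&: B)%MS.
by rewrite (AB0 _ (submx_trans AB_i (capmxSl _ _)) (submx_trans AB_i (capmxSr _ _)))
  sub0mx.
Qed.

Lemma closed_vsubspace (W : set V) : vsubspace W -> closed W.
Proof.
case/vsubspace_seqmx=> l Wl.
have -> : W = (fun v : V => v *m cokermx (seqmx l)) @^-1` [set 0].
  by apply/seteqP; split=> v /=; rewrite Wl submxE => /eqP.
apply: preimage_closed; first by move=> x _; exact: mulmx_continuous.
exact/accessible_closed_set1/hausdorff_accessible/norm_hausdorff.
Qed.

Lemma add_subgroup_setadd (W G : set V) :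
  vsubspace W -> add_subgroup G -> add_subgroup (setadd W G).
Proof.
move=> [W0 W_lin] [G0 GB]; split; first by exists 0, 0; rewrite addr0.
move=> _ _ [w1 [g1 [W1 [G1 ->]]]] [w2 [g2 [W2 [G2 ->]]]].
exists (w1 - w2), (g1 - g2); split; last split.
- by rewrite addrC -scaleN1r; apply: W_lin.
- exact: GB.
- by rewrite opprD addrACA.
Qed.

Section SubSum.
Context {E D W G : set V}.
Hypotheses (vE : vsubspace E) (vW : vsubspace W) (WE : W `<=` E) (GD : G `<=` D).
Hypothesis isolated_D : forall x, D x -> exists U, nbhs x U /\ U `&` D = [set x].
Hypothesis capED : E `&` vect D = [set 0].

Lemma projection_setadd : exists p : V -> V,
  continuous p /\ forall x y, E x -> D y -> p (x + y) = y.
Proof.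
have [lE [lEE EM]] := seqmx_spanning E.
have [lD [lDD DM]] := seqmx_spanning D.
have DE0 : (<<seqmx lD>> :&: <<seqmx lE>> = 0)%MS.
  apply: capmx_rV_eq0 => u; rewrite !genmxE => uD uE.
  have : (E `&` vect D) u.
    by split; [exact: vsubspace_sub_seqmx uE | exact: vect_sub_seqmx uD].
  by rewrite capED.
exists (fun v => v *m (proj_mx <<seqmx lD>> <<seqmx lE>>)%MS).
split=> [|x y Ex Dy]; first exact: mulmx_continuous.
rewrite mulmxDl proj_mx_0 ?proj_mx_id ?add0r //.
- by rewrite genmxE; exact: DM.
- by rewrite genmxE; exact: EM.
Qed.

Lemma closure_setadd_sub {z e d : V} : closure (setadd W G) z ->
  E e -> D d -> z = e + d -> G d /\ closure ((fun v => v - d) @^-1` W) z.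
Proof.
move=> clz Ee Dd ze.
have [p [p_cont p_proj]] := projection_setadd.
have [U [Ud UD]] := isolated_D d Dd.
have zU : nbhs z (p @^-1` U) by apply: p_cont; rewrite /= ze p_proj.
have near_d B : nbhs z B -> exists2 w, W w & G d /\ B (w + d).
  move=> zB; have [_ [[w [g [Ww [Gg ->]]]] [Bwg Uwg]]] := clz _ (filterI zB zU).
  rewrite /= (p_proj _ _ (WE _ Ww) (GD _ Gg)) in Uwg.
  have : (U `&` D) g by split; last exact: GD.
  by rewrite UD => /= gd; subst g; exists w.
split; first by have [w _ []] := near_d _ filterT.
by move=> B /near_d [w Ww [_ Bwd]]; exists (w + d); split=> //=; rewrite addrK.
Qed.

Lemma closed_setadd_sub : closed (setadd E D) -> closed (setadd W G).
Proof.
move=> clED z clz.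
have [e [d [Ee [Dd ze]]]] : setadd E D z.
  apply: clED; apply: (closureS _ clz) => _ [w [g [Ww [Gg ->]]]].
  by exists w, g; split; [exact: WE | split; [exact: GD|]].
have [Gd clWd] := closure_setadd_sub clz Ee Dd ze.
exists (z - d), d; split; last by split=> //; rewrite subrK.
suff : closed ((fun v => v - d) @^-1` W) by apply.
apply: preimage_closed; last exact: closed_vsubspace.
by move=> x _; apply: continuousB => //; exact: cst_continuous.
Qed.

End SubSum.

Section Morphism.
Context {E D E' D' : set V} {f f1 f2 : V -> V}.
Hypotheses (vE : vsubspace E) (gD : add_subgroup D).
Hypothesis f1_lin : forall a x y, E x -> E y -> f1 (a *: x + y) = a *: f1 x + f1 y.
Hypothesis f2_add : forall y z, D y -> D z -> f2 (y + z) = f2 y + f2 z.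

Lemma linear_on0 : f1 0 = 0.
Proof.
have [E0 _] := vE; have := f1_lin 1 0 0 E0 E0; rewrite !scale1r addr0.
by move/(congr1 (fun v => v - f1 0)); rewrite subrr addrK.
Qed.

Lemma vsubspace_kernel : vsubspace (E `&` [set x | f1 x = 0]).
Proof.
have [E0 E_lin] := vE.
split=> [|a x y [Ex f1x] [Ey f1y]]; first by split; last exact: linear_on0.
split; first exact: E_lin.
by rewrite /= f1_lin // f1x f1y scaler0 addr0.
Qed.

Lemma vsubspace_image : vsubspace (f1 @` E).
Proof.
have [E0 E_lin] := vE.
split=> [|a _ _ [x Ex <-] [y Ey <-]]; first by exists 0; last exact: linear_on0.
by exists (a *: x + y); [exact: E_lin | exact: f1_lin].
Qed.

Lemma additive_onB y z : D y -> D z -> f2 (y - z) = f2 y - f2 z.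
Proof.
have [_ DB] := gD; move=> Dy Dz.
by have := f2_add _ _ (DB _ _ Dy Dz) Dz; rewrite subrK => ->; rewrite addrK.
Qed.

Lemma additive_on0 : f2 0 = 0.
Proof. by have [D0 _] := gD; rewrite -{1}(subrr 0) additive_onB // subrr. Qed.

Lemma add_subgroup_kernel : add_subgroup (D `&` [set y | f2 y = 0]).
Proof.
have [D0 DB] := gD.
split=> [|y z [Dy f2y] [Dz f2z]]; first by split=> //; exact: additive_on0.
by split; [exact: DB | rewrite /= additive_onB // f2y f2z subr0].
Qed.

Lemma add_subgroup_image : add_subgroup (f2 @` D).
Proof.
have [D0 DB] := gD.
split=> [|_ _ [y Dy <-] [z Dz <-]]; first by exists 0; last exact: additive_on0.
by exists (y - z); [exact: DB | exact: additive_onB].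
Qed.

Hypotheses (f1E : forall x, E x -> E' (f1 x)) (f2D : forall y, D y -> D' (f2 y)).
Hypothesis f_add : forall x y, E x -> D y -> f (x + y) = f1 x + f2 y.

Lemma Im_setadd : Im (setadd E D) f = setadd (f1 @` E) (f2 @` D).
Proof.
apply/seteqP;
  split=> [_ [_ [x [y [Ex [Dy ->]]]] <-]|_ [_ [_ [[x Ex <-] [[y Dy <-] ->]]]]].
  by rewrite f_add //; exists (f1 x), (f2 y); split; [exists x | split; [exists y|]].
by exists (x + y); [exists x, y | rewrite f_add].
Qed.

Hypotheses (vE' : vsubspace E') (capE'D' : E' `&` vect D' = [set 0]).

Lemma Ker_setadd : Ker (setadd E D) f =
  setadd (E `&` [set x | f1 x = 0]) (D `&` [set y | f2 y = 0]).
Proof.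
apply/seteqP; split=> [_ [[x [y [Ex [Dy ->]]]]]|_ [x [y [[Ex f1x] [[Dy f2y] ->]]]]];
  last first.
  by split; [exists x, y | rewrite f_add // f1x f2y addr0].
rewrite f_add // => f1f2.
have [E'0 E'_lin] := vE'.
have f2y : (E' `&` vect D') (f2 y).
  split.
    by rewrite -(addr0_eq f1f2) -scaleN1r -[_ *: _]addr0; apply: E'_lin; auto.
  exists 1%N, (fun _ => 1), (fun _ => f2 y); split; first by move=> _; exact: f2D.
  by rewrite big_ord1 scale1r.
rewrite capE'D' /= in f2y.
have f1x : f1 x = 0 by rewrite -f1f2 f2y addr0.
by exists x, y.
Qed.

End Morphism.
End Closedness.

Theorem corollary4p2 (R : realType) (n : nat) (H E D K E' D' : set 'rV[R]_n)
  (f : 'rV[R]_n -> 'rV[R]_n) :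
  closed_add_subgroup H -> cag_decomp H E D ->
  closed_add_subgroup K -> cag_decomp K E' D' ->
  cag_hom E D E' D' f ->
  closed_add_subgroup (Ker H f) /\ closed_add_subgroup (Im H f).
Proof.
move=> [_ clH] [vE [[gD isoD] [capED HE]]] [_ clK] [vE' [[_ isoD'] [capE'D' KE]]].
subst H K; case=> f1 [f2 [f1E [f1_lin [f2D [f2_add f_def]]]]].
have f_add x y : E x -> D y -> f (x + y) = f1 x + f2 y.
  by move=> Ex Dy; have := f_def 1 1 x y Ex Dy; rewrite !scale1r mulr1z.
rewrite (Ker_setadd f1E f2D f_add vE' capE'D') (Im_setadd f_add).
have vker := vsubspace_kernel vE f1_lin.
have vim := vsubspace_image vE f1_lin.
split; split.
- exact: add_subgroup_setadd vker (add_subgroup_kernel gD f2_add).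
- by apply: (closed_setadd_sub vE vker) isoD capED clH => [x []|y []].
- exact: add_subgroup_setadd vim (add_subgroup_image gD f2_add).
- apply: (closed_setadd_sub vE' vim) isoD' capE'D' clK.
  + by move=> _ [x Ex <-]; exact: f1E.
  + by move=> _ [y Dy <-]; exact: f2D.
Qed.
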